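(* Let $\mathcal{G}$ be an additive arithmetical semigroup satisfying Axiom $A^{\#}$ (constants $c_{\mathcal{G}}>0$, $q>1$, $0\le\eta<1$) with norm $\|g\|=q^{\partial(g)}$. For integers $n,m\ge0$ let $$R(n,m)=\sum_{\substack{0\le\partial(g)\le n\\ d_-(g)>m}}\frac{\mu(g)}{\|g\|}.$$ Then $R(n,m)=O(1)$ uniformly for all $n,m\ge0$.
   Context: An additive arithmetical semigroup is a commutative monoid $\mathcal{G}$ (written additively, identity $e_{\mathcal{G}}$) freely generated by a countable set $\mathcal{P}$ of primes, with an additive degree map $\partial\colon\mathcal{G}\to\mathbb{Z}_{\ge0}$, $\partial(e_{\mathcal{G}})=0$, $\partial(P)>0$ for primes, finitely many elements of each degree. Axiom $A^{\#}$: $\#\{g:\partial(g)=n\}=c_{\mathcal{G}}q^n+O(q^{\eta n})$. $P\mid g$ means $g=P+r$. $d_-(g)=\min\{\partial(P):P\mid g\}$ for $g\ne e_{\mathcal{G}}$, and $e_{\mathcal{G}}$ is included in the sum defining $R(n,m)$ (convention $d_-(e_{\mathcal{G}})=\infty$). $\mu$ is the Möbius function on $\mathcal{G}$. *)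

From HB Require Import structures.
From mathcomp Require Import all_boot all_order all_algebra.
From mathcomp Require Import finmap multiset.
From mathcomp Require Import all_classical all_reals all_analysis.
Set Implicit Arguments. Unset Strict Implicit. Unset Printing Implicit Defensive.
Import Order.TTheory GRing.Theory Num.Theory.
Local Open Scope ring_scope.
Open Scope mset_scope.
Open Scope ring_scope.

(* The additive arithmetical semigroup is modelled as the free commutative
   monoid {mset P} on a countable set P of primes (identity = empty multiset,
   addition = multiset sum); the degree of a prime is given by deg. *)

Definition gdeg (P : countType) (deg : P -> nat) (g : {mset P}) : nat :=
  (\sum_(p <- g) deg p)%N.

Definition gmu (R : nzRingType) (P : countType) (g : {mset P}) : R :=
  if uniq (g : seq P) then (-1) ^+ size (g : seq P) else 0.

(* d_-(g) > m : every prime dividing g has degree > m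
   (vacuously true for the identity, i.e. d_-(e) = infinity) *)
Definition dminus_gt (P : countType) (deg : P -> nat) (m : nat) (g : {mset P}) : bool :=
  all (fun p => (m < deg p)%N) (g : seq P).

(* R(n,m) = sum over g with 0 <= deg g <= n and d_-(g) > m of mu(g)/||g||,
   ||g|| = q^deg g; enum k is a duplicate-free list of all elements of degree k. *)
Definition Rsum (R : realType) (P : countType) (deg : P -> nat)
  (enum : nat -> seq {mset P}) (q : R) (n m : nat) : R :=
  \sum_(k < n.+1) \sum_(g <- enum k | dminus_gt deg m g)
     gmu R g / q ^+ gdeg deg g.

From mathcomp Require Import all_boot all_order all_algebra.
From mathcomp Require Import finmap multiset.
From mathcomp Require Import all_classical all_reals all_analysis.
From mathcomp Require Import ring lra.
Import Order.TTheory GRing.Theory Num.Theory.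
Local Open Scope ring_scope.
Open Scope mset_scope.
Open Scope ring_scope.

(* Write G(k) = #{g : deg g = k}, M_m(j) = sum of mu(d) over d of degree j
   with d_-(d) > m, so that R(n,m) = sum_(j <= n) M_m(j) / q^j.
   1. (Moebius on rough divisors.) For every g, the sum of mu(d) over the
      divisors d of g with d_-(d) > m is 1 if all primes of g have degree
      <= m, and 0 otherwise (pair d with p + d for a fixed large prime p | g).
   2. (Convolution identity.) Summing 1. over the g of degree N gives
      sum_(j <= N) M_m(j) G(N - j) = #{g : deg g = N, all primes of degree <= m},
      a number between 0 and G(N).
   3. (Analytic step.) For any real sequences with |M(j)| <= G(j),
      |G(k) - c q^k| <= C a^k with 0 <= a < q, and |sum_j M(j) G(N-j)| <= G(N),
      the sum sum_(j <= N) M(j)/q^j is bounded independently of N: multiply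
      by c q^N, replace c q^(N-j) by G(N-j) - E(N-j), and bound the error
      term by a geometric sum.
   Axiom A# gives step 3's hypothesis with a = q^eta < q. *)

Lemma perm_msetD (P : countType) (A B : {mset P}) :
  perm_eq (A `+` B : seq P) ((A : seq P) ++ (B : seq P)).
Proof. by apply/allP => x _ /=; rewrite count_cat !count_mem_mset msetE2. Qed.

Lemma perm_mset1D (P : countType) (p : P) (A : {mset P}) :
  perm_eq (p +` A : seq P) (p :: (A : seq P)).
Proof. by rewrite (permPl (perm_msetD _ _ _)) enum_msetn. Qed.

Lemma gdegD (P : countType) (deg : P -> nat) (A B : {mset P}) :
  gdeg deg (A `+` B) = (gdeg deg A + gdeg deg B)%N.
Proof. by rewrite /gdeg (perm_big _ (perm_msetD _ A B)) big_cat. Qed.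

Lemma gdeg_msubset (P : countType) (deg : P -> nat) (A B : {mset P}) :
  A `<=` B -> (gdeg deg A <= gdeg deg B)%N.
Proof. by move=> sAB; rewrite -(msetBDKC sAB) gdegD leq_addr. Qed.

Lemma gmu0 (R : nzRingType) (P : countType) : gmu R (mset0 : {mset P}) = 1.
Proof. by rewrite /gmu enum_mset0. Qed.

Lemma uniq_mset1D (P : countType) (p : P) (A : {mset P}) :
  uniq (p +` A : seq P) = (p \notin (A : seq P)) && uniq (A : seq P).
Proof. by rewrite (perm_uniq (perm_mset1D _ p A)). Qed.

Lemma gmu1D (R : nzRingType) (P : countType) (p : P) (A : {mset P}) :
  p \notin (A : seq P) -> gmu R (p +` A) = - gmu R A.
Proof.
move=> pA; rewrite /gmu uniq_mset1D pA /= (perm_size (perm_mset1D _ p A)) /=.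
by case: ifP => _; rewrite ?oppr0 // exprS mulN1r.
Qed.

Lemma sum_gmu_squarefree (R : nzRingType) (P : countType)
  (s : seq {mset P}) (C : pred {mset P}) :
  \sum_(d <- s | C d) gmu R d = \sum_(d <- s | C d && uniq (d : seq P)) gmu R d.
Proof.
rewrite (bigID (fun d : {mset P} => uniq (d : seq P))) /= [X in _ + X]big1 ?addr0 //.
by move=> d /andP[_ nu]; rewrite /gmu (negbTE nu).
Qed.

Definition smooth {P : countType} (deg : P -> nat) (m : nat) (h : {mset P}) : bool :=
  all (fun p => (deg p <= m)%N) (h : seq P).

Section MoebiusRoughDivisors.
Context {R : nzRingType} {P : countType} (deg : P -> nat) (m : nat).
Context {g : {mset P}} {s : seq {mset P}}.
Hypothesis s_uniq : uniq s.
Hypothesis s_divisors : forall d, d `<=` g -> d \in s.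

(* If g is m-smooth, its only divisor without small primes is the identity. *)
Lemma sum_gmu_rough_divisors_smooth :
  smooth deg m g -> \sum_(d <- s | dminus_gt deg m d && (d `<=` g)) gmu R d = 1.
Proof.
move=> smooth_g.
have only0 d : dminus_gt deg m d && (d `<=` g) = (d == mset0).
  apply/idP/eqP => [/andP[rough_d dg]|->]; last first.
    by rewrite /dminus_gt enum_mset0 /= msub0set.
  apply/msetP => a; rewrite mset0E; apply/mset_eq0P/negP => ad.
  have := allP rough_d a ad.
  by rewrite ltnNge (allP smooth_g a (msubset_subset dg ad)).
rewrite (eq_bigl _ _ only0) -big_filter.
rewrite (@filter_pred1_uniq _ s mset0) ?s_divisors ?msub0set //.
by rewrite big_seq1 gmu0.
Qed.

Context {p0 : P}.
Hypotheses (p0g : p0 \in (g : seq P)) (p0_large : (m < deg p0)%N).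

Definition rough_sqf_divisor (d : {mset P}) : bool :=
  [&& dminus_gt deg m d, d `<=` g & uniq (d : seq P)].

Lemma rough_sqf_divisors_with_p0 :
  perm_eq [seq d <- s | rough_sqf_divisor d && (p0 \in (d : seq P))]
          [seq p0 +` d | d <- [seq d <- s | rough_sqf_divisor d &&
                                              (p0 \notin (d : seq P))]].
Proof.
apply: uniq_perm; first exact: filter_uniq.
  rewrite map_inj_uniq; first exact: filter_uniq.
  exact: (@can_inj _ _ (msetD [mset p0]) (fun B => B `\ p0) (msetD1K p0)).
move=> x; rewrite mem_filter; apply/idP/mapP.
  case/andP => /andP [/and3P [rough_x xg ux] p0x] xs.
  have xE : x = p0 +` (x `\ p0) by rewrite msetB1K.
  move: ux; rewrite xE uniq_mset1D => /andP [p0n un].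
  have sub : x `\ p0 `<=` g := msubset_trans (msubD1set _ _) xg.
  exists (x `\ p0) => //.
  rewrite mem_filter /rough_sqf_divisor p0n un sub s_divisors //.
  rewrite !andbT; apply/allP => a ad; apply: (allP rough_x).
  exact: (msubset_subset (msubD1set x p0) ad).
case=> d; rewrite mem_filter => /andP [/andP [/and3P [rough_d dg ud] p0d] _] ->.
have sub : p0 +` d `<=` g.
  apply/msubsetP => a; rewrite mset1DE.
  case: eqP => [->|_]; last by rewrite add0n (msubsetP dg).
  by move/mset_eq0P: p0d => ->; rewrite addn0 -in_mset.
rewrite /rough_sqf_divisor uniq_mset1D p0d ud sub mset1D1 s_divisors //= andbT.
rewrite /dminus_gt (perm_all _ (perm_mset1D _ p0 d)) /= p0_large.
by rewrite -/(dminus_gt _ _ _) rough_d.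
Qed.

(* If g has a prime p0 of degree > m, the terms d and p0 + d cancel. *)
Lemma sum_gmu_rough_divisors_nonsmooth :
  \sum_(d <- s | dminus_gt deg m d && (d `<=` g)) gmu R d = 0.
Proof.
rewrite sum_gmu_squarefree (eq_bigl rough_sqf_divisor); last first.
  by move=> d; rewrite /rough_sqf_divisor andbA.
rewrite (bigID (fun d : {mset P} => p0 \in (d : seq P))) /=.
rewrite -[X in X + _]big_filter -[X in _ + X]big_filter.
rewrite (perm_big _ rough_sqf_divisors_with_p0) big_map.
rewrite (eq_big_seq (fun d => - gmu R d)) ?sumrN ?addNr // => d.
by rewrite mem_filter => /andP [/andP [_ p0d] _]; apply: gmu1D.
Qed.

End MoebiusRoughDivisors.

Lemma sum_gmu_rough_divisors {R : nzRingType} {P : countType} (deg : P -> nat)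
  (m : nat) {g : {mset P}} {s : seq {mset P}} :
  uniq s -> (forall d, d `<=` g -> d \in s) ->
  \sum_(d <- s | dminus_gt deg m d && (d `<=` g)) gmu R d =
  (smooth deg m g)%:R.
Proof.
move=> s_uniq s_div; case: (boolP (smooth deg m g)) => [sm|/allPn[p0 p0g]].
  exact: sum_gmu_rough_divisors_smooth.
rewrite -ltnNge => p0_large.
exact: (sum_gmu_rough_divisors_nonsmooth deg m s_uniq s_div p0g p0_large).
Qed.

Section CountingByDegree.
Variables (P : countType) (deg : P -> nat) (enum : nat -> seq {mset P}).
Hypothesis enum_uniq : forall k, uniq (enum k).
Hypothesis enum_spec : forall k (g : {mset P}), (g \in enum k) = (gdeg deg g == k).

(* g |-> d + g is a bijection from degree N - j onto the multiples of d of
   degree N, when deg d = j <= N. *)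
Lemma count_multiples (N : nat) {j : nat} {d : {mset P}} :
  gdeg deg d = j -> (j <= N)%N ->
  size (enum (N - j)%N) = count (fun g => d `<=` g) (enum N).
Proof.
move=> dj jN; rewrite -size_filter -(size_map (msetD d) (enum (N - j)%N)).
apply: perm_size.
apply: uniq_perm; [|by rewrite filter_uniq|move=> x].
  by rewrite map_inj_uniq //; apply: (can_inj (msetDKB d)).
rewrite mem_filter; apply/mapP/idP.
  case=> h; rewrite enum_spec => /eqP hdeg ->.
  rewrite enum_spec gdegD dj hdeg subnKC // eqxx andbT.
  by apply/msubsetP => a; rewrite msetE2 leq_addr.
case/andP => dx; rewrite enum_spec => /eqP xdeg.
exists (x `\` d); last by rewrite msetBDKC.
rewrite enum_spec; apply/eqP.
by move: xdeg; rewrite -{1}(msetBDKC dx) gdegD dj => <-; rewrite addKn.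
Qed.

Definition enum_below (n : nat) : seq {mset P} :=
  flatten [seq enum j | j <- iota 0 n].

Lemma mem_enum_below (n : nat) (d : {mset P}) :
  (d \in enum_below n) = (gdeg deg d < n)%N.
Proof.
apply/flattenP/idP => [[s /mapP [j jn ->]]|lt].
  by rewrite enum_spec => /eqP ->; rewrite mem_iota in jn.
exists (enum (gdeg deg d)); last by rewrite enum_spec.
by apply/mapP; exists (gdeg deg d); rewrite // mem_iota.
Qed.

Lemma enum_below_uniq (n : nat) : uniq (enum_below n).
Proof.
elim: n => [//|n IH]; rewrite /enum_below -addn1 iotaD map_cat flatten_cat.
rewrite cat_uniq IH /= cats0 enum_uniq andbT; apply/hasPn => d.
by rewrite enum_spec => /eqP dn; rewrite mem_enum_below dn add0n ltnn.
Qed.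

Variable R : realType.

Definition rough_mu_sum (m j : nat) : R :=
  \sum_(d <- enum j | dminus_gt deg m d) gmu R d.

Lemma Rsum_rough_mu_sum (q : R) (n m : nat) :
  Rsum deg enum q n m = \sum_(j < n.+1) rough_mu_sum m j / q ^+ j.
Proof.
apply: eq_bigr => j _; rewrite /rough_mu_sum mulr_suml.
rewrite big_seq_cond [RHS]big_seq_cond; apply: eq_bigr => d /andP [].
by rewrite enum_spec => /eqP ->.
Qed.

(* |mu| <= 1, hence |M_m(j)| <= G(j). *)
Lemma rough_mu_sum_le (m j : nat) : `|rough_mu_sum m j| <= (size (enum j))%:R.
Proof.
apply: le_trans (ler_norm_sum _ _ _) _.
rewrite -sum1_size natr_sum [leRHS](bigID (dminus_gt deg m)) /= -[leLHS]addr0.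
apply: lerD; last exact: sumr_ge0.
apply: ler_sum => d _; rewrite /gmu; case: ifP => _; last by rewrite normr0.
by rewrite normrX normrN normr1 expr1n.
Qed.

(* Step 2: sum_(j <= N) M_m(j) G(N - j) counts the m-smooth elements of
   degree N. Expand G(N - j) as a count of multiples, exchange the sums and
   apply step 1 to each g of degree N. *)
Lemma rough_mu_convolution (m N : nat) :
  \sum_(j < N.+1) rough_mu_sum m j * (size (enum (N - j)%N))%:R
  = (count (smooth deg m) (enum N))%:R.
Proof.
transitivity (\sum_(j < N.+1) \sum_(d <- enum j | dminus_gt deg m d)
                 \sum_(g <- enum N | d `<=` g) gmu R d).
  apply: eq_bigr => j _; rewrite big_distrl /=.
  rewrite big_seq_cond [RHS]big_seq_cond; apply: eq_bigr => d /andP [].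
  rewrite enum_spec => /eqP dj _.
  rewrite (count_multiples N dj); last by rewrite -ltnS.
  by rewrite big_const_seq iter_addr_0 mulr_natr.
under eq_bigr do rewrite (exchange_big_dep xpredT) //=.
rewrite exchange_big /= -sum1_count natr_sum [RHS]big_mkcond /=.
apply: eq_big_seq => g; rewrite enum_spec => /eqP gN.
have -> : \sum_(j < N.+1) \sum_(d <- enum j | dminus_gt deg m d && (d `<=` g)) gmu R d
  = \sum_(d <- enum_below N.+1 | dminus_gt deg m d && (d `<=` g)) gmu R d.
  by rewrite big_flatten big_map -[iota 0 N.+1]/(index_iota 0 N.+1) big_mkord.
rewrite (sum_gmu_rough_divisors deg m (enum_below_uniq N.+1)) => [|d dg].
  by case: smooth.
by rewrite mem_enum_below ltnS -gN gdeg_msubset.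
Qed.

End CountingByDegree.

Section ConvolutionBound.
Context {R : realFieldType} {c q a C : R} {G : nat -> R}.
Hypotheses (c_gt0 : 0 < c) (a_ge0 : 0 <= a) (a_lt_q : a < q).
Hypothesis G_approx : forall k, `|G k - c * q ^+ k| <= C * a ^+ k.

(* The error constant is nonnegative, as seen at k = 0. *)
Lemma error_const_ge0 : 0 <= C.
Proof. by have := G_approx 0; rewrite !expr0 !mulr1; apply: le_trans. Qed.

Lemma G_le (k : nat) : G k <= (c + C) * q ^+ k.
Proof.
have E_le : G k - c * q ^+ k <= C * a ^+ k := le_trans (ler_norm _) (G_approx k).
have : C * a ^+ k <= C * q ^+ k.
  apply: ler_wpM2l; first exact: error_const_ge0.
  have a_le_q : a <= q := ltW a_lt_q.
  by apply: lerXn2r; rewrite // nnegrE (le_trans a_ge0).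
by rewrite mulrDl; lra.
Qed.

Lemma geometric_convolution_le (N : nat) :
  \sum_(j < N.+1) q ^+ j * a ^+ (N - j)%N <= q / (q - a) * q ^+ N.
Proof.
have qa_gt0 : 0 < q - a by rewrite subr_gt0.
set K := q / (q - a); have KE : K * (q - a) = q by rewrite divfK // gt_eqF.
elim: N => [|N IH].
  by rewrite big_ord1 !expr0 !mulr1 ler_pdivlMr // mul1r lerBlDr lerDl.
rewrite big_ord_recr /= subnn expr0 mulr1.
have -> : \sum_(i < N.+1) q ^+ (widen_ord (leqnSn N.+1) i) * a ^+ (N.+1 - i)%N
   = a * \sum_(i < N.+1) q ^+ i * a ^+ (N - i)%N.
  rewrite mulr_sumr; apply: eq_bigr => i _ /=.
  have i_le_N : (i <= N)%N := ltn_ord i.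
  by rewrite (subSn i_le_N) exprS mulrCA.
have -> : K * q ^+ N.+1 = a * (K * q ^+ N) + K * (q - a) * q ^+ N.
  by rewrite exprS; ring.
by rewrite KE -exprS lerD2r ler_wpM2l.
Qed.

Context {M : nat -> R}.
Hypothesis M_le : forall j, `|M j| <= G j.

Lemma convolution_error_le (N : nat) :
  `|\sum_(j < N.+1) M j * (G (N - j)%N - c * q ^+ (N - j)%N)|
    <= (c + C) * C * (q / (q - a) * q ^+ N).
Proof.
apply: le_trans (ler_norm_sum _ _ _) _.
apply: (@le_trans _ _ (\sum_(j < N.+1) (c + C) * C * (q ^+ j * a ^+ (N - j)%N))).
  apply: ler_sum => j _; rewrite normrM mulrACA.
  by apply: ler_pM => //; apply: le_trans (M_le j) (G_le j).
rewrite -mulr_sumr ler_wpM2l ?geometric_convolution_le //.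
by rewrite mulr_ge0 ?addr_ge0 ?error_const_ge0 ?ltW.
Qed.

Lemma weighted_sum_bounded (N : nat) :
  `|\sum_(j < N.+1) M j * G (N - j)%N| <= G N ->
  `|\sum_(j < N.+1) M j / q ^+ j| <= (c + C) * (1 + C * (q / (q - a))) / c.
Proof.
move=> conv_le; set E := fun k => G k - c * q ^+ k.
have q_gt0 : 0 < q := le_lt_trans a_ge0 a_lt_q.
have cqN_gt0 : 0 < c * q ^+ N by rewrite mulr_gt0 ?exprn_gt0.
have decomp : c * q ^+ N * \sum_(j < N.+1) M j / q ^+ j
    = \sum_(j < N.+1) M j * G (N - j)%N - \sum_(j < N.+1) M j * E (N - j)%N.
  rewrite -sumrB mulr_sumr; apply: eq_bigr => j _.
  rewrite /E (exprB (ltn_ord j : (j <= N)%N)) ?unitfE ?expf_neq0 ?gt_eqF //.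
  by field; rewrite expf_neq0 // gt_eqF.
rewrite -(ler_pM2l cqN_gt0) -{1}(ger0_norm (ltW cqN_gt0)) -normrM decomp.
apply: le_trans (ler_normB _ _) _.
have -> : c * q ^+ N * ((c + C) * (1 + C * (q / (q - a))) / c)
    = (c + C) * q ^+ N + (c + C) * C * (q / (q - a) * q ^+ N).
  by field; rewrite !gt_eqF ?subr_gt0.
by apply: lerD; [apply: le_trans conv_le (G_le N) | apply: convolution_error_le].
Qed.

End ConvolutionBound.

(* Axiom A#, rewritten with the error exponent a = q^eta, which is < q. *)
Lemma axiomA_geometric {R : realType} {G : nat -> R} {c q eta : R} :
  1 < q -> 0 <= eta -> eta < 1 ->
  (exists C : R, forall n : nat, `|G n - c * q ^+ n| <= C * q `^ (eta * n%:R)) ->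
  exists2 a : R, 0 <= a < q &
    exists C : R, forall n, `|G n - c * q ^+ n| <= C * a ^+ n.
Proof.
move=> q_gt1 eta_ge0 eta_lt1 [C HC]; have q_gt0 : 0 < q := lt_trans ltr01 q_gt1.
exists (q `^ eta); last first.
  by exists C => n; move: (HC n); rewrite powRrM powR_mulrn ?powR_ge0.
rewrite powR_ge0 /= -ltr_ln ?posrE ?powR_gt0 // ln_powR gtr_pMl //.
exact: ln_gt0.
Qed.

Theorem lemma2p7 (R : realType) (P : countType) (deg : P -> nat)
  (deg_pos : forall p : P, (0 < deg p)%N)
  (enum : nat -> seq {mset P})
  (enum_uniq : forall k, uniq (enum k))
  (enum_spec : forall k (g : {mset P}), (g \in enum k) = (gdeg deg g == k))
  (c q eta : R) (c_pos : 0 < c) (q_gt1 : 1 < q) (eta_ge0 : 0 <= eta) (eta_lt1 : eta < 1)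
  (axiomA : exists C : R, forall n : nat,
      `| (size (enum n))%:R - c * q ^+ n | <= C * q `^ (eta * n%:R)) :
  exists B : R, forall n m : nat, `| Rsum deg enum q n m | <= B.
Proof.
have [a /andP [a_ge0 a_lt_q] [C G_approx]] :=
  axiomA_geometric q_gt1 eta_ge0 eta_lt1 axiomA.
exists ((c + C) * (1 + C * (q / (q - a))) / c) => n m.
rewrite Rsum_rough_mu_sum //.
apply: (weighted_sum_bounded c_pos a_ge0 a_lt_q G_approx).
  exact: rough_mu_sum_le.
by rewrite rough_mu_convolution // ger0_norm // ler_nat count_size.
Qed.
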